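(* Let $n\ge1$, let $C_{2n}$ be the cyclic group of order $2n$ generated by the rotation $j\mapsto j+1\pmod{2n}$ of $[2n]$, and let $D_{2n}$ be the dihedral group of order $4n$ of symmetries of the $2n$-gon, generated by this rotation and the reflection $j\mapsto -j \pmod{2n}$. Let $c_n$ and $d_n$ be the numbers of equivalence classes of $n$-diagrams under the actions of $C_{2n}$ and $D_{2n}$ respectively. Then \[ d_n = \frac{1}{2} \Big( c_n + \frac{1}{2} \big( \kappa_{n - 1} + \kappa_n \big) \Big), \qquad\text{where}\qquad \kappa_m = \sum_{k = 0}^{\lfloor m/2 \rfloor} \frac{m!}{k! \, (m - 2k)!}. \]
   Context: A chord diagram of order $n$ (an $n$-diagram) is a 3-regular graph on vertex set $[2n]=\{1,\dots,2n\}$ containing the $2n$-circuit $\Delta_{2n}=(1\,2\,\dots\,2n)$ as a subgraph; the edges not in $\Delta_{2n}$ are the chords (they form a perfect matching of $[2n]$). Given a group $G$ of permutations of $[2n]$ acting on $\Delta_{2n}$, two $n$-diagrams are equivalent if some $g\in G$ takes the chords of the first onto the chords of the second. *)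

From mathcomp Require Import all_boot all_order all_fingroup all_algebra.
Set Implicit Arguments. Unset Strict Implicit. Unset Printing Implicit Defensive.
Import GRing.Theory Num.Theory.

(* Vertices of the 2n-circuit: 'I_(2n) = {0,...,2n-1} (label j stands for j+1
   of the paper; 2n is identified with 0 mod 2n). *)

Lemma ord_pos m (x : 'I_m) : 0 < m.
Proof. exact: leq_ltn_trans (leq0n x) (ltn_ord x). Qed.

Definition rot_fun m (x : 'I_m) : 'I_m :=
  Ordinal (ltn_pmod x.+1 (ord_pos x)).
Definition refl_fun m (x : 'I_m) : 'I_m :=
  Ordinal (ltn_pmod (m - x) (ord_pos x)).

Lemma rot_fun_inj m : injective (@rot_fun m).
Proof.
move=> x y /(congr1 val) /= h; apply: val_inj => /=.
rewrite -(modn_small (ltn_ord x)) -(modn_small (ltn_ord y)).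
apply/eqP; rewrite -(eqn_modDr 1) !addn1; exact/eqP.
Qed.

Lemma refl_fun_inj m : injective (@refl_fun m).
Proof.
move=> x y /(congr1 val) /= h; apply: val_inj => /=.
rewrite -(modn_small (ltn_ord x)) -(modn_small (ltn_ord y)).
have hx := ltn_ord x; have hy := ltn_ord y.
have h2 : (m - x + (x + y) = m - y + (x + y) %[mod m])%N.
  by rewrite -(modnDml (m - x)) h modnDml.
move: h2; rewrite !addnA subnK ?(ltnW hx) // -addnA (addnC x) addnA.
by rewrite subnK ?(ltnW hy) // !modnDl => ->.
Qed.

Definition rot m : {perm 'I_m} := perm (@rot_fun_inj m).
Definition refl m : {perm 'I_m} := perm (@refl_fun_inj m).

Definition Cgrp m : {set {perm 'I_m}} := <<[set rot m]>>%g.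
Definition Dgrp m : {set {perm 'I_m}} := <<[set rot m; refl m]>>%g.

(* chord set of a diagram: a perfect matching of the vertex set *)
Definition perfect_matching m (M : {set {set 'I_m}}) : bool :=
  [forall e in M, #|e| == 2] && [forall x : 'I_m, #|[set e in M | x \in e]| == 1].

Definition act_chords m (g : {perm 'I_m}) (M : {set {set 'I_m}}) : {set {set 'I_m}} :=
  [set (fun x => g x) @: e | e : {set 'I_m} in M].

Definition chord_class m (G : {set {perm 'I_m}}) (M : {set {set 'I_m}}) :=
  [set act_chords g M | g in G].

Definition num_classes n (G : {set {perm 'I_(2 * n)}}) : nat :=
  #|[set chord_class G M | M in [set M | perfect_matching M]]|.

Definition c_n n := num_classes (Cgrp (2 * n)).
Definition d_n n := num_classes (Dgrp (2 * n)).

Local Open Scope ring_scope.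
Definition kappa (m : nat) : rat :=
  \sum_(0 <= k < (m./2).+1) (m`!)%:R / ((k`!)%:R * ((m - k.*2)`!)%:R).

(* Burnside's lemma counts classes of n-diagrams by averaging, over the group,
   the number of diagrams fixed by each element.  A diagram is a fixed-point-free
   involution of the 2n vertices, and it is fixed by g iff it commutes with g.
   The 2n rotations are shared by C_2n and D_2n, so 4n d_n = 2n c_n + (the sum
   over the 2n reflections).  A reflection j |-> -j-k has no fixed point for odd k
   and exactly two for even k; a diagram commuting with it must join those two
   points.  Either way one counts the fixed-point-free involutions f commuting
   with a fixed-point-free involution s of 2p points: the partner of a point a
   is either s a, leaving 2p-2 points, or one of 2p-2 other points b, and then f
   is forced on {a, b, s a, s b}.  So their number K p satisfies
   K p = K (p-1) + 2(p-1) K (p-2), as does kappa p.  Half of the reflections are of each kind, which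
   contributes n (kappa n + kappa (n-1)). *)

From Pilot Require Import Defs.
From mathcomp Require Import all_boot all_order all_fingroup all_algebra.
From mathcomp Require Import zify ring lra.
(* Re-imported so that rot denotes Defs.rot, not seq.rot. *)
Import Defs.
Set Implicit Arguments. Unset Strict Implicit. Unset Printing Implicit Defensive.
Import GRing.Theory Num.Theory.

(* pairings m k = m! / (k! (m - 2k)!): the ways to group 2k of m blocks into k
   pairs, each pair being matched in one of two ways. *)
Definition pairings m k := 'C(m, k.*2) * k.*2 ^_ k.

Definition kappa_nat m := \sum_(0 <= k < m.+1) pairings m k.

Lemma pairings_small m k : m < k.*2 -> pairings m k = 0.
Proof. by move=> ltmk; rewrite /pairings bin_small. Qed.

Lemma pairings0 m : pairings m 0 = 1.
Proof. by rewrite /pairings bin0. Qed.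

Lemma pairings_fact m k : k.*2 <= m -> pairings m k * (k`! * (m - k.*2)`!) = m`!.
Proof.
move=> le2km; have e2k : k.*2 - k = k by rewrite -addnn addnK.
have := ffact_fact (leq_addr k k); rewrite addnn e2k => ffactE.
by rewrite -(bin_fact le2km) -ffactE /pairings; ring.
Qed.

Lemma pairingsS m k : pairings m.+2 k.+1 = pairings m.+1 k.+1 + m.+1.*2 * pairings m k.
Proof.
rewrite /pairings doubleS binS mulnDl; congr (_ + _).
have eC : k.*2.+1 * 'C(m.+1, k.*2.+1) = m.+1 * 'C(m, k.*2) := esym (mul_bin_diag _ _).
have eF : k.+1 * k.*2.+1 ^_ k = k.*2.+1 * k.*2 ^_ k.
  have := ffactnSr k.*2.+1 k; rewrite ffactSS => ->.
  by rewrite mulnC; congr (_ * _); lia.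
apply/eqP; rewrite -(eqn_pmul2l (_ : 0 < k.*2.+1 * k.+1)) //; apply/eqP.
rewrite ffactSS.
transitivity ((k.*2.+1 * 'C(m.+1, k.*2.+1)) * (k.+1 * k.*2.+1 ^_ k) * k.*2.+2); first by ring.
by rewrite eC eF -!mul2n; ring.
Qed.

Lemma kappa_nat_widen m N : m./2 < N -> \sum_(0 <= k < N) pairings m k = kappa_nat m.
Proof.
have trunc M : m./2 < M -> \sum_(0 <= k < M) pairings m k
                          = \sum_(0 <= k < (m./2).+1) pairings m k.
  move=> ltmM; rewrite (big_cat_nat (n := (m./2).+1)) //=.
  rewrite [X in _ + X]big1_seq ?addn0 // => k /andP[_].
  rewrite mem_index_iota => /andP[ltmk _].
  by apply: pairings_small; rewrite -ltn_half_double.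
by move=> ltmN; rewrite /kappa_nat !trunc // ltn_half_double; lia.
Qed.

Lemma kappa_nat0 : kappa_nat 0 = 1.
Proof. by rewrite /kappa_nat big_nat1 pairings0. Qed.

Lemma kappa_natS p : kappa_nat p.+1 = kappa_nat p + p.*2 * kappa_nat p.-1.
Proof.
case: p => [|m]; first by rewrite /kappa_nat unlock.
rewrite {1}/kappa_nat big_nat_recl // pairings0.
under eq_big_nat => k _ do rewrite pairingsS.
rewrite big_split /= -big_distrr /= addnA -(pairings0 m.+1) -big_nat_recl //.
by rewrite !kappa_nat_widen // ltn_half_double; lia.
Qed.

Lemma kappaE m : kappa m = (kappa_nat m)%:R%R.
Proof.
rewrite /kappa -(kappa_nat_widen (N := (m./2).+1)) // natr_sum.
apply: eq_big_nat => k /andP[_ ltkm].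
have le2km : k.*2 <= m by rewrite -geq_half_double.
rewrite -(pairings_fact le2km) natrM -[X in (_ / X)%R]natrM mulfK // pnatr_eq0 -lt0n.
by rewrite muln_gt0 !fact_gt0.
Qed.

Lemma card_in_bij (A B : finType) (P : {set A}) (Q : {set B}) (f : A -> B) (g : B -> A) :
  {in P, forall x, f x \in Q} -> {in Q, forall y, g y \in P} ->
  {in P, cancel f g} -> {in Q, cancel g f} -> #|P| = #|Q|.
Proof.
move=> fPQ gQP fK gK; rewrite -(card_in_imset (can_in_inj fK)).
apply: eq_card => y; apply/imsetP/idP => [[x xP ->]|yQ]; first exact: fPQ.
by exists (g y); rewrite ?gK ?gQP.
Qed.

(** * Involutions commuting with an involution *)

Section CommutingInvolutions.

Variables (T : finType) (s : T -> T).

Definition fpf_involution_on (S : {set T}) (f : {ffun T -> T}) : bool :=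
  [forall x, if x \in S then [&& f x \in S, f x != x & f (f x) == x] else f x == x].

Lemma fpf_involution_onP (S : {set T}) (f : {ffun T -> T}) :
  reflect ((forall x, x \in S -> [/\ f x \in S, f x != x & f (f x) = x]) /\
           (forall x, x \notin S -> f x = x)) (fpf_involution_on S f).
Proof.
apply: (iffP forallP) => [fS|[fS fSC] x].
  split=> x; have := fS x; case: (x \in S) => //; first by case/and3P=> -> -> /eqP.
  by move/eqP.
by case: ifPn => [/fS[-> -> ->]|/fSC->] //; rewrite eqxx.
Qed.

Lemma fpf_involutionTP (f : {ffun T -> T}) :
  reflect (forall x, f x != x /\ f (f x) = x) (fpf_involution_on setT f).
Proof.
apply: (iffP (fpf_involution_onP _ _)) => [[fT _] x|fP].
  by have [] := fT x (in_setT x).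
split=> x; last by rewrite in_setT.
by move=> _; have [-> ->] := fP x; rewrite in_setT.
Qed.

Definition commutes_with (f : {ffun T -> T}) : bool := [forall x, f (s x) == s (f x)].

Lemma commutes_withP (f : {ffun T -> T}) : reflect (forall x, f (s x) = s (f x)) (commutes_with f).
Proof. by apply: (iffP forallP) => fs x; apply/eqP. Qed.

Definition fpf_count (S : {set T}) : nat :=
  #|[set f | fpf_involution_on S f && commutes_with f]|.

Lemma fpf_count0 : fpf_count set0 = 1.
Proof.
rewrite /fpf_count -(cards1 [ffun x : T => x]); apply: eq_card => f.
rewrite !inE; apply/andP/eqP => [[/fpf_involution_onP[_ f1] _]|->].
  by apply/ffunP => x; rewrite ffunE f1 ?inE.
split; first by apply/fpf_involution_onP; split=> x; rewrite ?inE // ffunE.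
by apply/commutes_withP => x; rewrite !ffunE.
Qed.

Definition patch (R : {set T}) (h : T -> T) (f : {ffun T -> T}) : {ffun T -> T} :=
  [ffun x => if x \in R then h x else f x].

Lemma fpf_involution_on_patch (S R : {set T}) (h : T -> T) (f : {ffun T -> T}) :
  R \subset S ->
  {in R, forall x, [/\ h x \in R, h x != x & h (h x) = x]} ->
  fpf_involution_on (S :\: R) f -> fpf_involution_on S (patch R h f).
Proof.
move=> sRS hR /fpf_involution_onP[fS fSC]; apply/fpf_involution_onP; split=> x.
  rewrite !ffunE; case: ifP => [xR|xNR] xS.
    by have [hxR -> ->] := hR x xR; rewrite hxR (subsetP sRS).
  have [] := fS x; first by rewrite inE xNR.
  by rewrite inE => /andP[/negPf fxNR ->] -> ->; rewrite fxNR.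
move=> xNS; have xNR : x \notin R by apply: contra xNS; apply: (subsetP sRS).
by rewrite ffunE (negPf xNR) fSC // inE negb_and xNS orbT.
Qed.

Lemma fpf_involution_on_unpatch (S R : {set T}) (h : T -> T) (f : {ffun T -> T}) :
  {in R, forall x, h x \in R} ->
  fpf_involution_on S f -> {in R, f =1 h} -> fpf_involution_on (S :\: R) (patch R id f).
Proof.
move=> hR /fpf_involution_onP[fS fSC] fh; apply/fpf_involution_onP; split=> x.
  rewrite inE ffunE => /andP[/negPf xNR xS]; rewrite xNR.
  have [fxS fxx ffx] := fS x xS.
  have fxNR : f x \notin R.
    by apply/negP => fxR; move/negbT: xNR; rewrite -ffx fh // hR.
  by rewrite inE ffunE fxNR (negPf fxNR) fxS ffx.
by rewrite inE ffunE negb_and negbK; case: ifP => //= _ /fSC.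
Qed.

Hypothesis sK : involutive s.

Lemma commutes_with_patch (R : {set T}) (h : T -> T) (f : {ffun T -> T}) :
  {in R, forall x, s x \in R} ->
  {in R, forall x, h (s x) = s (h x)} -> commutes_with f -> commutes_with (patch R h f).
Proof.
move=> sR hs /commutes_withP fs; apply/commutes_withP => x.
have sRE : (s x \in R) = (x \in R) by apply/idP/idP => [/sR|/sR]; rewrite ?sK.
by rewrite !ffunE sRE; case: ifP => [/hs|_].
Qed.

Lemma fpf_count_prescribed (S R : {set T}) (h : T -> T) :
  R \subset S -> {in R, forall x, s x \in R} ->
  {in R, forall x, [/\ h x \in R, h x != x, h (h x) = x & h (s x) = s (h x)]} ->
  #|[set f | [&& fpf_involution_on S f, commutes_with f & [forall x in R, f x == h x]]]|
  = fpf_count (S :\: R).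
Proof.
move=> sRS sR hR; apply: (card_in_bij (f := patch R id) (g := patch R h)) => f.
- rewrite !inE => /and3P[fS fs /forall_inP fh].
  apply/andP; split; last exact: commutes_with_patch.
  apply: (fpf_involution_on_unpatch (h := h)) => // [x /hR[]//|x xR].
  by apply/eqP; apply: fh.
- rewrite !inE => /andP[fS fs]; apply/and3P; split.
  + by apply: fpf_involution_on_patch => // x /hR[].
  + by apply: commutes_with_patch => // x /hR[].
  + by apply/forall_inP => x xR; rewrite ffunE xR.
- rewrite inE => /and3P[_ _ /forall_inP fh]; apply/ffunP => x.
  rewrite !ffunE; case: ifPn => [xR|/negPf-> //].
  by apply/esym/eqP; exact: fh.
- rewrite inE => /andP[/fpf_involution_onP[_ fSC] _]; apply/ffunP => x.
  rewrite !ffunE; case: ifPn => [xR|/negPf-> //].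
  by rewrite fSC // inE xR.
Qed.

Definition pair_block (a b : T) : {set T} := a |: (b |: [set s a; s b]).

Definition pair_swap (a b x : T) : T :=
  if x == a then b else if x == b then a else if x == s a then s b else s a.

Lemma pair_swap_involution a b : a != b -> s a != a -> s b != b ->
  {in pair_block a b, forall x,
    [/\ pair_swap a b x \in pair_block a b, pair_swap a b x != x,
        pair_swap a b (pair_swap a b x) = x & pair_swap a b (s x) = s (pair_swap a b x)]}.
Proof.
move=> neq_ab neq_saa neq_sbb.
have eqF (x y : T) : x != y -> (x == y) = false /\ (y == x) = false.
  by move=> neq_xy; rewrite (eq_sym y) (negPf neq_xy).
have [saa asa] := eqF _ _ neq_saa.
have [-> {neq_ab}|neq_bsa] := eqVneq b (s a).
{ move=> x; rewrite !inE => /or4P[]/eqP->; rewrite /pair_swap.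
  all: by do 2!rewrite ?eqxx ?sK ?saa ?asa /=. }
have neq_sab : s a != s b by rewrite (inj_eq (can_inj sK)).
have neq_asb : a != s b by apply: contra neq_bsa => /eqP->; rewrite sK.
have [ab ba] := eqF _ _ neq_ab; have [sbb bsb] := eqF _ _ neq_sbb.
have [sab sba] := eqF _ _ neq_sab; have [bsa sab'] := eqF _ _ neq_bsa.
have [asb sba'] := eqF _ _ neq_asb.
move=> x; rewrite !inE => /or4P[]/eqP->; rewrite /pair_swap.
all: by do 2!rewrite ?eqxx ?sK ?ab ?ba ?saa ?asa ?sbb ?bsb ?sab ?sba ?bsa ?sab' ?asb ?sba' /=.
Qed.

Lemma pair_swap_forced (S : {set T}) (f : {ffun T -> T}) a b :
  {in S, forall x, s x != x} -> a \in S ->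
  fpf_involution_on S f -> commutes_with f -> f a = b ->
  {in pair_block a b, f =1 pair_swap a b}.
Proof.
move=> sS aS /fpf_involution_onP[fS _] /commutes_withP fs fab.
have [bS neq_ba fb] := fS a aS; rewrite fab in bS neq_ba fb.
move=> x; rewrite !inE => /or4P[]/eqP->; rewrite /pair_swap.
- by rewrite eqxx.
- by rewrite (negPf neq_ba) eqxx.
- rewrite (negPf (sS a aS)) fs fab; case: eqP => [<-|_]; first by rewrite sK.
  by rewrite eqxx.
- rewrite fs fb; case: eqP => [<-|_]; first by rewrite sK.
  by rewrite (negPf (sS b bS)) (inj_eq (can_inj sK)) (negPf neq_ba).
Qed.

Lemma pair_block_sub (S : {set T}) a b : {in S, forall x, s x \in S} ->
  a \in S -> b \in S -> pair_block a b \subset S.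
Proof.
move=> sS aS bS; apply/subsetP => x.
by rewrite !inE => /or4P[]/eqP->; rewrite ?sS.
Qed.

Lemma pair_block_stable a b : {in pair_block a b, forall x, s x \in pair_block a b}.
Proof.
by move=> x; rewrite !inE => /or4P[]/eqP->; rewrite ?sK eqxx ?orTb ?orbT.
Qed.

Lemma card_pair_block_s a : s a != a -> #|pair_block a (s a)| = 2.
Proof.
move=> neq_saa; have -> : pair_block a (s a) = [set a; s a].
  by apply/setP => x; rewrite !inE sK; case: (x == a); case: (x == s a).
by rewrite cards2 eq_sym neq_saa.
Qed.

Lemma card_pair_block a b : s a != a -> s b != b -> b != a -> b != s a ->
  #|pair_block a b| = 4.
Proof.
move=> neq_saa neq_sbb neq_ba neq_bsa.
have neq_asb : a != s b by apply: contra neq_bsa => /eqP->; rewrite sK.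
rewrite !cardsU1 cards1 !inE [a == b]eq_sym [a == s a]eq_sym [b == s b]eq_sym.
by rewrite (negPf neq_ba) (negPf neq_saa) (negPf neq_asb) (negPf neq_bsa) (negPf neq_sbb)
  (inj_eq (can_inj sK)) eq_sym neq_ba.
Qed.

Lemma fpf_count_by_partner (S : {set T}) a : a \in S ->
  fpf_count S =
  \sum_(b in S :\ a) #|[set f | [&& fpf_involution_on S f, commutes_with f & f a == b]]|.
Proof.
move=> aS; rewrite /fpf_count -sum1_card.
rewrite (partition_big (fun f : {ffun T -> T} => f a) (mem (S :\ a))) /=.
  apply: eq_bigr => b _; rewrite sum1_card; apply: eq_card => f.
  by rewrite unfold_in !inE andbA.
move=> f; rewrite inE => /andP[/fpf_involution_onP[fS _] _].
by have [faS neq_faa _] := fS a aS; rewrite !inE faS neq_faa.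
Qed.

Section FreeSet.

Variable S : {set T}.
Hypotheses (sS : {in S, forall x, s x \in S}) (sfS : {in S, forall x, s x != x}).

Lemma fpf_count_partner a b : a \in S -> b \in S :\ a ->
  #|[set f | [&& fpf_involution_on S f, commutes_with f & f a == b]]|
  = fpf_count (S :\: pair_block a b).
Proof.
move=> aS /setD1P[neq_ba bS].
rewrite -(fpf_count_prescribed (h := pair_swap a b)); first last.
- by apply: pair_swap_involution; rewrite ?sfS // eq_sym.
- exact: pair_block_stable.
- exact: pair_block_sub.
apply: eq_card => f; rewrite !inE.
apply/and3P/and3P => [[fS fs /eqP fab]|[fS fs /forall_inP fh]]; split=> //.
  by apply/forall_inP => x xR; apply/eqP; apply: (pair_swap_forced sfS aS).
by have /eqP-> := fh a (setU11 _ _); rewrite /pair_swap eqxx.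
Qed.

Lemma setD_stable (R : {set T}) : {in R, forall x, s x \in R} ->
  {in S :\: R, forall x, s x \in S :\: R}.
Proof.
move=> sR x /setDP[xS xNR]; rewrite inE sS // andbT.
by apply: contra xNR => /sR; rewrite sK.
Qed.

End FreeSet.

Lemma fpf_count_free p (S : {set T}) : #|S| = p.*2 ->
  {in S, forall x, s x \in S} -> {in S, forall x, s x != x} -> fpf_count S = kappa_nat p.
Proof.
elim/ltn_ind: p S => p IH S cardS sS sfS.
case: p IH cardS => [|p] IH cardS.
  by move/eqP: cardS; rewrite cards_eq0 => /eqP->; rewrite fpf_count0 kappa_nat0.
have /set0Pn[a aS] : S != set0 by rewrite -card_gt0 cardS.
have [saS neq_saa] := (sS a aS, sfS a aS).
have step b q : b \in S :\ a -> q < p.+1 -> #|pair_block a b| = (p.+1 - q).*2 ->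
    #|[set f | [&& fpf_involution_on S f, commutes_with f & f a == b]]| = kappa_nat q.
  move=> bSa ltqp cardR; rewrite fpf_count_partner //; apply: IH => //.
  - have /setD1P[_ bS] := bSa.
    rewrite cardsD (setIidPr (pair_block_sub sS aS bS)) cardS cardR; lia.
  - exact/setD_stable/pair_block_stable.
  - by move=> x /setDP[xS _]; apply: sfS.
rewrite (fpf_count_by_partner aS) (big_setD1 (s a)) ?inE ?neq_saa ?saS //=.
rewrite (step (s a) p) ?inE ?neq_saa ?saS ?card_pair_block_s //; last lia.
rewrite (eq_bigr (fun=> kappa_nat p.-1)) => [|b]; last first.
  rewrite !inE => /and3P[neq_bsa neq_ba bS].
  have card4 := card_pair_block neq_saa (sfS b bS) neq_ba neq_bsa.
  have le4 : 4 <= p.+1.*2 by rewrite -cardS -card4 subset_leq_card // pair_block_sub.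
  by rewrite (step b p.-1) ?inE ?neq_ba ?bS ?card4 //; lia.
have cardSa : #|S :\ a :\ s a| = p.*2.
  have := cardsD1 a S; have := cardsD1 (s a) (S :\ a).
  by rewrite aS !inE saS neq_saa cardS /=; lia.
by rewrite sum_nat_const cardSa kappa_natS.
Qed.

Lemma fpf_count_two_fixed (S : {set T}) u v : u \in S -> v \in S -> u != v ->
  {in S, forall x, (s x == x) = (x == u) || (x == v)} ->
  fpf_count S = fpf_count (S :\: [set u; v]).
Proof.
move=> uS vS neq_uv fixS.
have [su sv] : s u = u /\ s v = v by split; apply/eqP; rewrite fixS ?eqxx ?orbT.
have eq_vu : (v == u) = false by rewrite eq_sym (negPf neq_uv).
rewrite -(fpf_count_prescribed (h := fun x => if x == u then v else u)); first last.
- by move=> x /set2P[]->; do 2!rewrite ?eqxx ?eq_vu ?su ?sv ?inE ?orbT.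
- by move=> x /set2P[]->; rewrite ?su ?sv !inE eqxx ?orbT.
- by apply/subsetP => x /set2P[]->.
apply: eq_card => f; rewrite !inE; apply/andP/and3P => [[fS fs]|[]//].
split=> //; have [/fpf_involution_onP[fSS _] /commutes_withP sf] := (fS, fs).
have [fuS neq_fuu ffu] := fSS u uS.
have fuv : f u = v.
  apply/eqP; move: (fixS _ fuS); rewrite -sf su eqxx (negPf neq_fuu) /=.
  by move/esym.
apply/forall_inP => x /set2P[]->; first by rewrite eqxx fuv.
by rewrite eq_vu -{1}fuv ffu.
Qed.

End CommutingInvolutions.

(** * Diagrams as fixed-point-free involutions *)

Section Matchings.

Variable m : nat.
Implicit Types (f : {ffun 'I_m -> 'I_m}) (M : {set {set 'I_m}}).

Definition matching_of f : {set {set 'I_m}} := [set [set x; f x] | x : 'I_m].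

Lemma perfect_matching_of f : fpf_involution_on setT f -> perfect_matching (matching_of f).
Proof.
move/fpf_involutionTP=> fP; apply/andP; split.
  apply/forall_inP => _ /imsetP[x _ ->].
  by rewrite cards2 (eq_sym x) (proj1 (fP x)).
apply/forallP => x; apply/cards1P; exists [set x; f x]; apply/setP => e.
rewrite !inE; apply/andP/eqP => [[/imsetP[y _ ->]]|->]; last first.
  by split; [apply: imset_f | apply: set21].
by case/set2P=> [->//|->]; rewrite (proj2 (fP y)) setUC.
Qed.

Lemma perfect_matching_uniq M x e1 e2 : perfect_matching M ->
  e1 \in M -> e2 \in M -> x \in e1 -> x \in e2 -> e1 = e2.
Proof.
case/andP=> _ /forallP /(_ x) /cards1P[e eE] e1M e2M xe1 xe2.
have : e1 \in [set e in M | x \in e] by rewrite inE e1M xe1.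
have : e2 \in [set e in M | x \in e] by rewrite inE e2M xe2.
by rewrite eE !inE => /eqP-> /eqP->.
Qed.

Lemma perfect_matchingP M : perfect_matching M ->
  exists2 f, fpf_involution_on setT f & M = matching_of f.
Proof.
move=> pmM; have /andP[/forall_inP card2 /forallP card1] := pmM.
have partner x : exists y, (y != x) && ([set x; y] \in M).
  have /cards1P[e eE] := card1 x.
  have : e \in [set e in M | x \in e] by rewrite eE set11.
  rewrite inE => /andP[eM xe]; have /cards2P[u [v [neq_uv euv]]] := card2 e eM.
  move: xe; rewrite euv => /set2P[] ->; first by exists v; rewrite eq_sym neq_uv -euv.
  by exists u; rewrite neq_uv setUC -euv.
pose f := [ffun x => odflt x [pick y | (y != x) && ([set x; y] \in M)]].
have fP x : (f x != x) && ([set x; f x] \in M).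
  rewrite /f ffunE; case: pickP => [y //|noy].
  by have [y] := partner x; rewrite noy.
have ffx x : f (f x) = x.
  have /andP[_ xM] := fP x; have /andP[neq_ffx fxM] := fP (f x).
  have exM := perfect_matching_uniq pmM fxM xM (set21 _ _) (set22 _ _).
  have : f (f x) \in [set x; f x] by rewrite -exM set22.
  by case/set2P=> // efx; move: neq_ffx; rewrite efx eqxx.
have fT : fpf_involution_on setT f.
  by apply/fpf_involutionTP => x; rewrite ffx; have /andP[] := fP x.
exists f => //; apply/setP => e; apply/idP/imsetP => [eM|[x _ ->]].
  have /cards2P[u [v [_ euv]]] := card2 e eM; have /andP[_ uM] := fP u.
  by exists u => //; apply: (perfect_matching_uniq (x := u) pmM eM uM); rewrite ?euv set21.
by have /andP[] := fP x.
Qed.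

Lemma matching_of_inj f f' : fpf_involution_on setT f -> fpf_involution_on setT f' ->
  matching_of f = matching_of f' -> f = f'.
Proof.
move=> /fpf_involutionTP fP /fpf_involutionTP f'P eqM; apply/ffunP => x.
have : [set x; f x] \in matching_of f' by rewrite -eqM; apply: imset_f.
case/imsetP=> y _ exy; have [neq_fxx _] := fP x.
have : f x \in [set y; f' y] by rewrite -exy set22.
have : x \in [set y; f' y] by rewrite -exy set21.
case/set2P=> ?; subst x; first by case/set2P=> // efy; rewrite efy eqxx in neq_fxx.
have [_ ->] := f'P y; case/set2P=> // efx.
by rewrite efx eqxx in neq_fxx.
Qed.

Definition conj_ffun (g : {perm 'I_m}) f : {ffun 'I_m -> 'I_m} :=
  [ffun x => g (f (g^-1%g x))].

Lemma fpf_involution_on_conj g f :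
  fpf_involution_on setT f -> fpf_involution_on setT (conj_ffun g f).
Proof.
move/fpf_involutionTP=> fP; apply/fpf_involutionTP => x; rewrite !ffunE permK.
have [neq_f ->] := fP (g^-1%g x); rewrite permKV; split=> //.
by apply: contra neq_f => /eqP {2}<-; rewrite permK.
Qed.

Lemma act_chords_matching_of g f :
  act_chords g (matching_of f) = matching_of (conj_ffun g f).
Proof.
apply/setP => e; apply/imsetP/imsetP => [[_ /imsetP[x _ ->] ->]|[x _ ->]].
  by exists (g x) => //; rewrite ffunE permK imsetU !imset_set1.
exists [set g^-1%g x; f (g^-1%g x)]; first exact: imset_f.
by rewrite imsetU !imset_set1 permKV ffunE.
Qed.

Lemma card_fixed_matchings (g : {perm 'I_m}) :
  #|[set M | perfect_matching M && (act_chords g M == M)]| = fpf_count g setT.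
Proof.
rewrite /fpf_count -(card_in_imset (f := matching_of)); last first.
  by move=> f f'; rewrite !inE => /andP[fT _] /andP[f'T _]; apply: matching_of_inj.
apply: eq_card => M; rewrite inE; apply/andP/imsetP => [[pmM /eqP gM]|[f]].
  have [f fT eM] := perfect_matchingP pmM; exists f => //; rewrite inE fT /=.
  have /ffunP gfg : conj_ffun g f = f.
    apply: matching_of_inj; rewrite ?fpf_involution_on_conj //.
    by rewrite -act_chords_matching_of -eM.
  by apply/commutes_withP => x; rewrite -gfg ffunE permK.
rewrite inE => /andP[fT /commutes_withP gf] ->; split; first exact: perfect_matching_of.
rewrite act_chords_matching_of; apply/eqP; congr matching_of; apply/ffunP => x.
by rewrite ffunE -gf permKV.
Qed.

End Matchings.

(** * Rotations and reflections *)

Section Dihedral.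

Variable m : nat.
Local Open Scope group_scope.

Implicit Types (g : {perm 'I_m}) (x : 'I_m).

Lemma rotE x : rot m x = x.+1 %% m :> nat.
Proof. by rewrite permE. Qed.

Lemma reflE x : refl m x = (m - x) %% m :> nat.
Proof. by rewrite permE. Qed.

Lemma rotX k x : (rot m ^+ k) x = (x + k) %% m :> nat.
Proof.
elim: k => [|k IHk]; first by rewrite expg0 perm1 addn0 modn_small.
by rewrite expgSr permM rotE IHk -addn1 modnDml -addnA addn1.
Qed.

Lemma rot_refl_rot x : rot m (refl m (rot m x)) = refl m x.
Proof.
have ltxm := ltn_ord x; apply: val_inj; rewrite /= rotE reflE rotE reflE.
have [ltx1m|] := ltnP x.+1 m.
  rewrite (modn_small ltx1m) (modn_small (m := m - x.+1)); last lia.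
  by congr (_ %% m); lia.
move=> lemx1; have -> : x.+1 = m by lia.
by rewrite modnn subn0 modnn; congr (_ %% m); lia.
Qed.

Lemma refl_refl : refl m * refl m = 1.
Proof.
apply/permP => x; rewrite permM perm1; apply: val_inj; rewrite /= !reflE.
have ltxm := ltn_ord x; have [->|x_gt0] := posnP x; first by rewrite subn0 modnn subn0 modnn.
by rewrite (modn_small (m := m - x)) ?modn_small; lia.
Qed.

Lemma rot_order : rot m ^+ m = 1.
Proof. by apply/permP => x; apply: val_inj; rewrite /= perm1 rotX modnDr modn_small. Qed.

Lemma rotX0 x k : x = 0 :> nat -> k < m -> (rot m ^+ k) x = k :> nat.
Proof. by move=> x0 ltkm; rewrite rotX x0 modn_small. Qed.

Lemma rotX_inj : 0 < m -> injective (fun k : 'I_m => rot m ^+ k).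
Proof.
move=> m_gt0 i j eqij; apply: val_inj; pose z : 'I_m := Ordinal m_gt0.
by have := congr1 (fun g => val (g z)) eqij; rewrite /= !rotX0.
Qed.

Definition commutes_rot g := [forall x, g (rot m x) == rot m (g x)].
Definition reverses_rot g := [forall x, rot m (g (rot m x)) == g x].

Definition rot_normalizing := [set g | commutes_rot g || reverses_rot g].

Lemma rot_normalizing_group : group_set rot_normalizing.
Proof.
apply/group_setP; split=> [|g h].
  by rewrite inE; apply/orP; left; apply/forallP => x; rewrite !perm1.
rewrite !inE => /orP[] /forallP gr /orP[] /forallP hr; apply/orP.
- by left; apply/forallP => x; rewrite !permM (eqP (gr x)) (eqP (hr _)).
- by right; apply/forallP => x; rewrite !permM (eqP (gr x)) (eqP (hr _)).
- by right; apply/forallP => x; rewrite !permM -(eqP (hr _)) (eqP (gr x)).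
- by left; apply/forallP => x; rewrite !permM -(eqP (gr x)) (eqP (hr _)).
Qed.

Lemma Dgrp_sub_rot_normalizing : Dgrp m \subset rot_normalizing.
Proof.
rewrite -[rot_normalizing]/(gval (Group rot_normalizing_group)) gen_subG.
apply/subsetP => g /set2P[]->; rewrite inE; apply/orP; [left|right]; apply/forallP => x //.
by rewrite rot_refl_rot.
Qed.

Lemma commutes_rotE x g : x = 0 :> nat -> commutes_rot g -> g = rot m ^+ g x.
Proof.
move=> x0 /forallP gr.
have grX k : g ((rot m ^+ k) x) = (rot m ^+ k) (g x).
  elim: k => [|k IHk]; first by rewrite expg0 !perm1.
  by rewrite expgSr !permM (eqP (gr _)) IHk.
apply/permP => y; have -> : y = (rot m ^+ y) x by apply: val_inj; rewrite /= rotX0.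
by rewrite grX; apply: val_inj; rewrite /= !rotX x0 add0n modnDml addnC.
Qed.

Definition reflection k : {perm 'I_m} := rot m ^+ k * refl m.

Lemma reverses_rot_commutes g : reverses_rot g -> commutes_rot (g * refl m).
Proof.
by move=> /forallP gr; apply/forallP => x; rewrite !permM -(eqP (gr x)) rot_refl_rot.
Qed.

Definition dihedral_elt (u : 'I_m + 'I_m) : {perm 'I_m} :=
  match u with inl k => rot m ^+ k | inr k => reflection k end.

Lemma Cgrp_image : 0 < m -> Cgrp m = [set rot m ^+ k | k : 'I_m].
Proof.
move=> m_gt0; apply/eqP; rewrite eqEsubset; apply/andP; split.
  apply/subsetP => _ /cycleP[i ->]; apply/imsetP.
  by exists (Ordinal (ltn_pmod i m_gt0)); rewrite //= expg_mod // rot_order.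
by apply/subsetP => _ /imsetP[k _ ->]; apply: mem_cycle.
Qed.

Lemma Dgrp_image : 0 < m -> Dgrp m = [set dihedral_elt u | u : 'I_m + 'I_m].
Proof.
move=> m_gt0; pose z : 'I_m := Ordinal m_gt0.
apply/eqP; rewrite eqEsubset; apply/andP; split; last first.
  apply/subsetP => _ /imsetP[[k|k] _ ->] /=.
    by rewrite groupX // mem_gen // set21.
  by rewrite groupM ?groupX // mem_gen // ?set21 ?set22.
apply/subsetP => g /(subsetP Dgrp_sub_rot_normalizing); rewrite inE => /orP[gr|gr].
  by apply/imsetP; exists (inl (g z)) => //=; apply: commutes_rotE.
apply/imsetP; exists (inr ((g * refl m) z)) => //=.
rewrite /reflection -(commutes_rotE (x := z)) ?reverses_rot_commutes //.
by rewrite -mulgA refl_refl mulg1.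
Qed.

Lemma reflectionE k x : (reflection k x + (x + k)) %% m = 0.
Proof.
have m_gt0 : 0 < m := ord_pos x.
rewrite permM reflE rotX modnDml -modnDmr subnK ?modnn //.
exact: ltnW (ltn_pmod _ m_gt0).
Qed.

Lemma ord_addn_mod_inj k (x y : 'I_m) : x + k = y + k %[mod m] -> x = y.
Proof.
by move/eqP; rewrite eqn_modDr !modn_small // => /eqP/val_inj.
Qed.

Lemma reflectionK k : involutive (reflection k).
Proof.
move=> x; apply: (@ord_addn_mod_inj (reflection k x + k)).
by rewrite reflectionE addnCA reflectionE.
Qed.

Lemma reflection_fixed k x : (reflection k x == x) = (m %| x.*2 + k).
Proof.
apply/eqP/eqP => [fixx|dvd_m].
  by have := reflectionE k x; rewrite fixx addnA addnn.
apply: (@ord_addn_mod_inj (x + k)).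
by rewrite reflectionE addnA addnn dvd_m.
Qed.

Lemma dihedral_elt_inj : 2 < m -> injective dihedral_elt.
Proof.
move=> m_gt2; have m_gt1 : 1 < m by lia.
have m_gt0 : 0 < m by lia.
have rotX_neq_reflection (i j : 'I_m) : rot m ^+ i != reflection j.
  (* Evaluating at 0 and at 1 would give m %| 2. *)
  apply/eqP => eq_ij; pose z : 'I_m := Ordinal m_gt0; pose o : 'I_m := Ordinal m_gt1.
  have h0 := reflectionE j z; have h1 := reflectionE j o.
  rewrite -eq_ij rotX /= add0n (modn_small (ltn_ord i)) in h0.
  rewrite -eq_ij rotX /= modnDml addnACA addnn -modnDmr h0 addn0 modn_small // in h1.
have rotX_inj' := rotX_inj m_gt0.
case=> i [] j /= eq_ij.
- by rewrite (rotX_inj' _ _ eq_ij).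
- by move: (rotX_neq_reflection i j); rewrite eq_ij eqxx.
- by move: (rotX_neq_reflection j i); rewrite eq_ij eqxx.
- by rewrite (rotX_inj' _ _ (mulIg _ _ _ eq_ij)).
Qed.

End Dihedral.

Lemma dvdn_double_odd n k x : odd k -> (2 * n %| x.*2 + k) = false.
Proof.
move=> odd_k; apply/negP => /(dvdn_trans (dvdn_mulr n (dvdnn 2))).
by rewrite dvdn2 oddD odd_double odd_k.
Qed.

Lemma dvdn_double_even n j x : 0 < n -> j < n -> x < 2 * n ->
  (2 * n %| x.*2 + j.*2) = (x == n - j) || (x == (2 * n - j) %% (2 * n)).
Proof.
move=> n_gt0 ltjn ltx2n; rewrite -doubleD -mul2n dvdn_pmul2l //.
apply/idP/idP => [/dvdnP[q exjq]|].
  have ltq3 : q < 3 by rewrite -(ltn_pmul2r n_gt0) -exjq; lia.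
  case: q ltq3 exjq => [|[|[|q]]] // _ exjq.
  - have [-> ->] : x = 0 /\ j = 0 by lia.
    by rewrite !subn0 modnn eqxx orbT.
  - by apply/orP; left; apply/eqP; lia.
  - by apply/orP; right; rewrite modn_small; [apply/eqP; lia | lia].
case/orP => /eqP ->; first by apply/dvdnP; exists 1; lia.
have [->|j_gt0] := posnP j; first by rewrite !subn0 modnn.
by rewrite modn_small; [apply/dvdnP; exists 2; lia | lia].
Qed.

Lemma fpf_count_reflection n k : 0 < n -> k < 2 * n ->
  fpf_count (reflection (2 * n) k) setT = if odd k then kappa_nat n else kappa_nat n.-1.
Proof.
move=> n_gt0 ltk2n; set s := reflection (2 * n) k.
have sK : involutive s := reflectionK k.
have fix_s x : (s x == x) = (2 * n %| x.*2 + k) := reflection_fixed k x.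
have cardT : #|[set: 'I_(2 * n)]| = n.*2 by rewrite cardsT card_ord -mul2n.
case: ifP => [odd_k|even_k].
  by apply: fpf_count_free => // x _; rewrite fix_s dvdn_double_odd.
have [j kE] : exists j, k = j.*2 by exists k./2; rewrite -{1}(odd_double_half k) even_k.
have ltjn : j < n by lia.
have ltu : n - j < 2 * n by lia.
have ltv : (2 * n - j) %% (2 * n) < 2 * n by rewrite ltn_pmod; lia.
pose u := Ordinal ltu; pose v := Ordinal ltv.
have fix_uv x : (s x == x) = (x == u) || (x == v).
  by rewrite fix_s kE dvdn_double_even.
have neq_uv : u != v.
  rewrite -val_eqE /=; have [->|j_gt0] := posnP j; first by rewrite !subn0 modnn; lia.
  by rewrite modn_small; lia.
rewrite (fpf_count_two_fixed sK (u := u) (v := v)) ?in_setT //.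
apply: fpf_count_free => // [|x|x].
- by rewrite cardsD setTI cards2 neq_uv cardT; lia.
- rewrite !inE !andbT => /norP[neq_xu neq_xv]; apply/norP; split.
    by apply: contra neq_xu => /eqP sxu; rewrite -(sK x) sxu fix_uv eqxx.
  by apply: contra neq_xv => /eqP sxv; rewrite -(sK x) sxv fix_uv eqxx orbT.
- by rewrite !inE !andbT fix_uv.
Qed.

(** * Counting classes *)

Definition chord_action m : {action {perm 'I_m} &-> {set {set 'I_m}}} := (('P^*)^*)%act.

Lemma perfect_matching_act m (g : {perm 'I_m}) M :
  perfect_matching M -> perfect_matching (act_chords g M).
Proof.
case/perfect_matchingP=> f fT ->; rewrite act_chords_matching_of.
by apply/perfect_matching_of/fpf_involution_on_conj.
Qed.

Lemma acts_perfect_matchings m (G : {group {perm 'I_m}}) :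
  [acts G, on [set M | perfect_matching M] | chord_action m].
Proof.
apply/subsetP => g _; apply/astabsP => M; rewrite !inE /=.
apply/idP/idP => [pmgM|]; last exact: perfect_matching_act.
by have := perfect_matching_act g^-1 pmgM; rewrite -[act_chords _ _]/(chord_action m _ _) actK.
Qed.

Lemma num_classes_burnside n (G : {group {perm 'I_(2 * n)}}) :
  num_classes G * #|G| = \sum_(g in G) fpf_count g setT.
Proof.
rewrite -(Frobenius_Cauchy (acts_perfect_matchings G)); apply: eq_bigr => g _.
rewrite -card_fixed_matchings; apply: eq_card => M.
by rewrite !inE sub1set inE.
Qed.

Lemma num_classes_enum n (G : {group {perm 'I_(2 * n)}}) (I : finType)
    (h : I -> {perm 'I_(2 * n)}) :
  injective h -> G = [set h i | i : I] :> {set _} ->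
  num_classes G * #|I| = \sum_i fpf_count (h i) setT.
Proof.
move=> h_inj GE; have cardG : #|G| = #|I| by rewrite GE card_imset.
by rewrite -cardG num_classes_burnside GE big_imset //=; apply: in2W.
Qed.

Lemma sum_odd_even n A B : \sum_(0 <= k < 2 * n) (if odd k then A else B) = n * (A + B).
Proof.
elim: n => [|n IHn]; first by rewrite big_nil.
by rewrite mulnS !big_nat_recr //= IHn mul2n odd_double /=; ring.
Qed.

Lemma d_n_from_c_n n : 1 < n -> d_n n * 4 = c_n n * 2 + (kappa_nat n + kappa_nat n.-1).
Proof.
move=> n_gt1; have m_gt0 : 0 < 2 * n by lia.
have m_gt2 : 2 < 2 * n by lia.
have n_gt0 : 0 < n by lia.
have hC := num_classes_enum (G := <<[set rot (2 * n)]>>%G)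
  (rotX_inj m_gt0) (Cgrp_image m_gt0).
have hD := num_classes_enum (G := <<[set rot (2 * n); refl (2 * n)]>>%G)
  (dihedral_elt_inj m_gt2) (Dgrp_image m_gt0).
rewrite big_sumType card_sum card_ord -hC /= in hD.
rewrite (eq_bigr _ (fun k _ => fpf_count_reflection n_gt0 (ltn_ord k))) in hD.
rewrite -(big_mkord xpredT (fun k => if odd k then _ else _)) sum_odd_even in hD.
rewrite card_ord in hD; apply/eqP; rewrite -(eqn_pmul2l n_gt0) -/(d_n n) -/(c_n n) in hD *.
apply/eqP; nia.
Qed.

(* For n = 1, dihedral_elt is not injective (refl 2 = 1); there is a single
   diagram anyway. *)
Lemma perfect_matching_2 (M : {set {set 'I_(2 * 1)}}) :
  perfect_matching M = (M == [set setT]).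
Proof.
have card_setT : #|[set: 'I_(2 * 1)]| = 2 by rewrite cardsT card_ord.
apply/idP/eqP => [/andP[/forall_inP card2 /forallP card1]|->]; last first.
  apply/andP; split; first by apply/forall_inP => e; rewrite inE => /eqP->; rewrite card_setT.
  apply/forallP => x; apply/cards1P; exists setT; apply/setP => e.
  by rewrite !inE; case: eqP => // ->; rewrite in_setT.
have eT e : e \in M -> e = setT.
  by move=> eM; apply/eqP; rewrite eqEcard subsetT card_setT (eqP (card2 e eM)).
have /cards1P[e0 e0E] := card1 ord0.
have : e0 \in [set e in M | ord0 \in e] by rewrite e0E set11.
rewrite inE => /andP[e0M _]; apply/setP => e; rewrite inE.
by apply/idP/eqP => [/eT//|->]; rewrite -(eT e0).
Qed.

Lemma num_classes_1 (G : {set {perm 'I_(2 * 1)}}) : num_classes G = 1.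
Proof.
rewrite /num_classes.
have -> : [set M : {set {set 'I_(2 * 1)}} | perfect_matching M] = [set [set setT]].
  by apply/setP => M; rewrite !inE perfect_matching_2.
by rewrite imset_set1 cards1.
Qed.

Local Open Scope ring_scope.

Theorem theorem3 (n : nat) (hn : (1 <= n)%N) :
  (d_n n)%:R = 2^-1 * ((c_n n)%:R + 2^-1 * (kappa n.-1 + kappa n)) :> rat.
Proof.
rewrite !kappaE; case: n hn => [//|[_|n _]].
  by rewrite /d_n /c_n !num_classes_1 kappa_natS kappa_nat0 /=.
have /(congr1 (fun k => k%:R : rat)) := d_n_from_c_n (isT : (1 < n.+2)%N).
by rewrite !natrD !natrM /=; lra.
Qed.
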